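(* Let $G$ be a finite graph with $n$ vertices and maximum degree at most $\Delta$. For any $\epsilon>0$, taking $\lambda=e^{\frac{\Delta\log 2}{2\epsilon}}$, the average matching size $E(G,\lambda)$ is an $\epsilon n$-approximation of the maximum matching size of $G$, i.e. $|E(G,\lambda)-\mathrm{OPT}|\le\epsilon n$ where $\mathrm{OPT}$ is the size of a maximum matching.
   Context: For a finite graph $G$ and $\lambda>0$, $E(G,\lambda)=\sum_{M}|M|\lambda^{|M|}/Z(G,\lambda)$ with $Z(G,\lambda)=\sum_M\lambda^{|M|}$, both sums over all matchings $M$ of $G$. *)

From mathcomp Require Import all_boot all_order all_algebra.
From mathcomp Require Import reals.
From mathcomp.analysis Require Import sequences exp.
Set Implicit Arguments. Unset Strict Implicit. Unset Printing Implicit Defensive.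
Import Order.TTheory GRing.Theory Num.Theory.
Local Open Scope ring_scope.

(* A finite simple graph: vertex type T (finite), adjacency e : rel T,
   assumed symmetric and irreflexive (hypotheses of the theorem). *)

Definition edges (T : finType) (e : rel T) : {set {set T}} :=
  [set [set x; y] | x in T, y in T & e x y].

Definition is_matching (T : finType) (e : rel T) (M : {set {set T}}) : bool :=
  (M \subset edges e) && trivIset M.

Definition matchings (T : finType) (e : rel T) : {set {set {set T}}} :=
  [set M | is_matching e M].

Definition deg (T : finType) (e : rel T) (v : T) : nat := #|[set u | e v u]|.

Definition OPT (T : finType) (e : rel T) : nat :=
  \max_(M in matchings e) #|M|.

Definition Zm (R : realType) (T : finType) (e : rel T) (lam : R) : R :=
  \sum_(M in matchings e) lam ^+ #|M|.

Definition Em (R : realType) (T : finType) (e : rel T) (lam : R) : R :=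
  (\sum_(M in matchings e) (#|M|%:R * lam ^+ #|M|)) / Zm e lam.

From mathcomp Require Import all_boot all_order all_algebra.
From mathcomp Require Import reals.
From mathcomp.analysis Require Import sequences exp.
From mathcomp Require Import ring lra zify.
Import Order.TTheory GRing.Theory Num.Theory.
Local Open Scope ring_scope.

(* The Gibbs distribution p(M) ~ lam^|M| on matchings has entropy
   ln Z - s E(G, lam) (with lam = e^s), which is at most ln #matchings
   <= #edges * ln 2 <= Delta n ln 2 / 2.  Since Z >= lam^OPT, this gives
   s (OPT - E) <= Delta n ln 2 / 2, i.e. OPT - E <= eps n for the chosen s;
   the other direction E <= OPT is trivial. *)

Lemma mul_ln_div_le (R : realType) (a b : R) :
  0 < a -> 0 < b -> a * ln (b / a) <= b - a.
Proof.
move=> a_gt0 b_gt0; set x := b / a.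
have x_gt0 : 0 < x by rewrite divr_gt0.
have ln_x : ln x <= x - 1.
  by have := @le_ln1Dx R (x - 1); rewrite addrCA subrr addr0; apply; lra.
have -> : b - a = a * (x - 1) by rewrite /x; field; rewrite gt_eqF.
by apply: ler_wpM2l => //; exact: ltW.
Qed.

Section GibbsMean.
Variables (R : realType) (I : finType) (A : {pred I}) (f : I -> R) (s : R).

Definition gibbs_sum : R := \sum_(i in A) expR (s * f i).

Definition gibbs_mean : R := (\sum_(i in A) f i * expR (s * f i)) / gibbs_sum.

Variable i0 : I.
Hypothesis A_i0 : i0 \in A.

Lemma expR_le_gibbs_sum : expR (s * f i0) <= gibbs_sum.
Proof.
rewrite /gibbs_sum (bigD1 i0) //= lerDl.
by apply: sumr_ge0 => i _; rewrite ltW ?expR_gt0.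
Qed.

Lemma gibbs_sum_gt0 : 0 < gibbs_sum.
Proof. exact: lt_le_trans (expR_gt0 _) expR_le_gibbs_sum. Qed.

Lemma gibbs_mean_le (m : R) : {in A, forall i, f i <= m} -> gibbs_mean <= m.
Proof.
move=> f_le; rewrite ler_pdivrMr ?gibbs_sum_gt0 // /gibbs_sum mulr_sumr.
by apply: ler_sum => i Ai; rewrite ler_wpM2r ?f_le ?ltW ?expR_gt0.
Qed.

Lemma le_gibbs_mean (m : R) : {in A, forall i, m <= f i} -> m <= gibbs_mean.
Proof.
move=> f_ge; rewrite ler_pdivlMr ?gibbs_sum_gt0 // /gibbs_sum mulr_sumr.
by apply: ler_sum => i Ai; rewrite ler_wpM2r ?f_ge ?ltW ?expR_gt0.
Qed.

(* Gibbs' inequality: the entropy ln Z - s <f> of the Gibbs distribution is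
   at most ln #|A|; sum [mul_ln_div_le] with a := e^(s f i), b := Z / #|A|. *)
Lemma ln_gibbs_sum_le : ln gibbs_sum <= ln #|A|%:R + s * gibbs_mean.
Proof.
set Z := gibbs_sum; set N : R := #|A|%:R.
have Z_gt0 : 0 < Z := gibbs_sum_gt0.
have N_gt0 : 0 < N by rewrite ltr0n; apply/card_gt0P; exists i0.
have termwise i : expR (s * f i) * (ln Z - ln N - s * f i) <= Z / N - expR (s * f i).
  have := @mul_ln_div_le R _ _ (expR_gt0 (s * f i)) (divr_gt0 Z_gt0 N_gt0).
  by rewrite ln_div ?posrE ?divr_gt0 ?expR_gt0 // expRK ln_div ?posrE.
set S := \sum_(i in A) f i * expR (s * f i).
have entropy_ineq : Z * (ln Z - ln N) - s * S <= 0.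
  have <- : \sum_(i in A) (Z / N - expR (s * f i)) = 0.
    by rewrite sumrB sumr_const -mulr_natr mulfVK ?gt_eqF // subrr.
  have -> : Z * (ln Z - ln N) - s * S
      = \sum_(i in A) expR (s * f i) * (ln Z - ln N - s * f i).
    rewrite {1}/Z /gibbs_sum mulr_suml /S mulr_sumr -sumrB.
    by apply: eq_bigr => i _; ring.
  by apply: ler_sum => i _; apply: termwise.
rewrite /gibbs_mean -/Z -/S mulrA -lerBlDl ler_pdivlMr //.
lra.
Qed.

Lemma gibbs_mean_gap : s * (f i0 - gibbs_mean) <= ln #|A|%:R.
Proof.
have := ln_gibbs_sum_le; rewrite -lerBlDr mulrBr.
apply: le_trans; rewrite lerD2r -[s * f i0]expRK.
by rewrite ler_ln ?posrE ?expR_gt0 ?gibbs_sum_gt0 ?expR_le_gibbs_sum.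
Qed.

End GibbsMean.

Arguments gibbs_sum {R I} A f s.
Arguments gibbs_mean {R I} A f s.
Arguments gibbs_mean_le {R I A f s i0}.
Arguments le_gibbs_mean {R I A f s i0}.
Arguments gibbs_mean_gap {R I A} f s {i0}.

Section Matchings.
Variables (T : finType) (e : rel T).

Lemma set0_in_matchings : set0 \in matchings e.
Proof. by rewrite inE /is_matching sub0set /trivIset /cover !big_set0 cards0. Qed.

Lemma matching_subset_edges M : M \in matchings e -> M \subset edges e.
Proof. by rewrite inE => /andP[]. Qed.

Lemma card_matching_le_OPT M : M \in matchings e -> (#|M| <= OPT e)%N.
Proof. exact: leq_bigmax_cond. Qed.

Lemma OPT_attained : exists2 M, M \in matchings e & #|M| = OPT e.
Proof.
have matchings_gt0 : (0 < #|matchings e|)%N.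
  by apply/card_gt0P; exists set0; exact: set0_in_matchings.
have [M M_match M_max] := eq_bigmax_cond (fun M : {set {set T}} => #|M|) matchings_gt0.
by exists M => //; rewrite /OPT M_max.
Qed.

Lemma OPT_le_card_edges : (OPT e <= #|edges e|)%N.
Proof.
have [M M_match <-] := OPT_attained.
exact/subset_leq_card/matching_subset_edges.
Qed.

Lemma card_matchings_le : (#|matchings e| <= 2 ^ #|edges e|)%N.
Proof.
rewrite -card_powerset; apply/subset_leq_card/subsetP => M M_match.
by rewrite powersetE matching_subset_edges.
Qed.

Hypotheses (e_sym : symmetric e) (e_irr : irreflexive e).

Lemma card_edge S : S \in edges e -> #|S| = 2%N.
Proof.
case/imset2P=> x y _; rewrite inE => /andP[_ exy] ->.
by rewrite cards2; case: eqP => // x_y; rewrite x_y e_irr in exy.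
Qed.

Lemma edges_at_le_deg v : (#|[set S in edges e | v \in S]| <= deg e v)%N.
Proof.
apply: leq_trans (leq_imset_card (fun u => [set v; u]) [set u | e v u]).
apply/subset_leq_card/subsetP => S; rewrite inE => /andP[].
case/imset2P=> x y _; rewrite inE => /andP[_ exy] -> /set2P[] ->.
  by apply/imsetP; exists y; rewrite ?inE.
by apply/imsetP; exists x; rewrite ?inE 1?e_sym // setUC.
Qed.

Lemma double_count_edges :
  (2 * #|edges e| = \sum_(v : T) #|[set S in edges e | v \in S]|)%N.
Proof.
rewrite mulnC -sum_nat_const -(eq_bigr _ card_edge).
under eq_bigr do rewrite -sum1_card big_mkcond /=.
rewrite exchange_big; apply: eq_bigr => v _.
rewrite -sum1_card big_mkcond [RHS]big_mkcond /=.
by apply: eq_bigr => S _; rewrite inE; case: (S \in edges e).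
Qed.

Lemma handshake_le (Delta : nat) :
  (forall v, (deg e v <= Delta)%N) -> (2 * #|edges e| <= Delta * #|T|)%N.
Proof.
move=> deg_le; rewrite double_count_edges mulnC -sum_nat_const.
by apply: leq_sum => v _; exact: leq_trans (edges_at_le_deg v) (deg_le v).
Qed.

End Matchings.

Arguments OPT_attained {T} e.
Arguments card_matching_le_OPT {T e M}.
Arguments OPT_le_card_edges {T} e.
Arguments handshake_le {T e} e_sym e_irr {Delta}.

Lemma Em_gibbs_mean (R : realType) (T : finType) (e : rel T) (s : R) :
  Em e (expR s) = gibbs_mean (matchings e) (fun M => #|M|%:R) s.
Proof.
rewrite /Em /Zm /gibbs_mean /gibbs_sum.
by congr (_ / _); apply: eq_bigr => M _; rewrite [s * _]mulrC expRM_natl.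
Qed.

Theorem lemma6 (R : realType) (T : finType) (e : rel T)
  (e_sym : symmetric e) (e_irr : irreflexive e)
  (Delta : nat) (hdeg : forall v : T, (deg e v <= Delta)%N)
  (eps : R) (heps : 0 < eps) :
  let lam := expR (Delta%:R * ln 2 / (2 * eps)) in
  `|Em e lam - (OPT e)%:R| <= eps * #|T|%:R.
Proof.
rewrite /= Em_gibbs_mean; set s := _ / _; set E := gibbs_mean _ _ _.
have [Mo Mo_match Mo_OPT] := OPT_attained e.
have E_le_OPT : E <= (OPT e)%:R.
  apply: (gibbs_mean_le Mo_match) => M M_match.
  by rewrite ler_nat card_matching_le_OPT.
have E_ge0 : 0 <= E by apply: (le_gibbs_mean Mo_match) => M _.
have handshake := handshake_le e_sym e_irr hdeg.
rewrite ler0_norm ?subr_le0 // opprB.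
(* For Delta = 0 we have s = 0, but then the graph is edgeless. *)
have [Delta0|Delta_gt0] := posnP Delta.
  have : (OPT e <= 0)%N.
    by have := OPT_le_card_edges e; move: handshake; rewrite Delta0; lia.
  rewrite leqn0 => /eqP ->; rewrite sub0r.
  by have := mulr_ge0 (ltW heps) (ler0n R #|T|); lra.
have ln2_gt0 : 0 < ln (2 : R) by rewrite ln_gt0 ?ltr1n.
have s_gt0 : 0 < s by rewrite divr_gt0 ?mulr_gt0 ?ltr0n.
have gap := gibbs_mean_gap (fun M : {set {set T}} => #|M|%:R) s Mo_match.
rewrite Mo_OPT -/E in gap.
have ln_N : ln #|matchings e|%:R <= #|edges e|%:R * ln 2 :> R.
  rewrite mulr_natl -lnXn // -natrX ler_ln ?posrE ?ltr0n ?expn_gt0 // ?ler_nat.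
    exact: card_matchings_le.
  by apply/card_gt0P; exists Mo.
rewrite -(ler_pM2l s_gt0); apply: le_trans gap _; apply: le_trans ln_N _.
have -> : s * (eps * #|T|%:R) = Delta%:R * #|T|%:R / 2 * ln 2.
  by rewrite /s; field; rewrite gt_eqF.
by rewrite ler_pM2r // ler_pdivlMr // mulrC -!natrM ler_nat.
Qed.
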